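(* Let $N$ qudits (each $\mathbb{C}^N$) be in the $N$-singlet $|S^{(N)}_N(\boldsymbol\alpha^{(0)})\rangle$, where $\boldsymbol\alpha^{(0)}=\{|\alpha^{(0)}_i\rangle\}_{i=1}^N$ is an orthonormal basis. For $m=1,\dots,M$ (with $M<N$), party $m$ measures qudit $m$ in an orthonormal basis $B_m=\{|\alpha^{(m)}_i\rangle\}_{i=1}^N$, where $|\alpha^{(m)}_i\rangle=U^{(m)}|\alpha^{(m-1)}_i\rangle$. Here $U^{(1)}$ is an arbitrary unitary on $\mathbb{C}^N$. For $m\ge2$, let $n_1,\dots,n_{m-1}$ be the indices of the outcomes already obtained; then $U^{(m)}$ is an arbitrary unitary that acts as the identity on each $|\alpha^{(m-1)}_{n_k}\rangle$, $k<m$, and maps the span of the remaining $N-m+1$ vectors $\{|\alpha^{(m-1)}_i\rangle\}_{i\notin\{n_1,\dots,n_{m-1}\}}$ into itself. Whatever the outcomes $|\alpha^{(m)}_{n_m}\rangle$, the final state is, up to a global phase, $$|\alpha^{(1)}_{n_1}\rangle_1\cdots|\alpha^{(M)}_{n_M}\rangle_M\otimes|S^{(N-M)}_{N-M}(\boldsymbol\alpha^{(M)};n_1,\dots,n_M)\rangle_{M+1,\dots,N}.$$ That is, the unmeasured parties share an $(N-M)$-singlet written in the basis $B_M$ with the levels $|\alpha^{(M)}_{n_1}\rangle,\dots,|\alpha^{(M)}_{n_M}\rangle$ excluded.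
   Context: For an orthonormal basis $\boldsymbol\alpha=\{|\alpha_i\rangle\}_{i=1}^N$ of $\mathbb{C}^N$, the $N$-singlet is $|S^{(N)}_N(\boldsymbol\alpha)\rangle=\frac{1}{\sqrt{N!}}\sum_{\pi\in S_N}\operatorname{sgn}(\pi)|\alpha_{\pi(1)},\dots,\alpha_{\pi(N)}\rangle$. For a set $\{n_1,\dots,n_M\}$ of distinct indices, $|S^{(N-M)}_{N-M}(\boldsymbol\alpha;n_1,\dots,n_M)\rangle$ denotes the totally antisymmetric normalized state of $N-M$ qudits built from the basis vectors $\{|\alpha_i\rangle\}_{i\notin\{n_1,\dots,n_M\}}$: $\frac{1}{\sqrt{(N-M)!}}\sum_\sigma\operatorname{sgn}(\sigma)|\alpha_{\sigma(1)},\dots,\alpha_{\sigma(N-M)}\rangle$, where $\sigma$ ranges over bijections onto the complementary index set. *)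

(* Complex amplitudes live in an arbitrary
   numClosedFieldType C (e.g. complex numbers / algC), with conjugation x^*. *)
From HB Require Import structures.
From mathcomp Require Import all_boot all_order all_algebra all_fingroup.
Set Implicit Arguments. Unset Strict Implicit. Unset Printing Implicit Defensive.
Import Order.TTheory GRing.Theory Num.Theory.
Local Open Scope ring_scope.

Section Defs.
Variables (C : numClosedFieldType) (N : nat).

(* A state of N qudits (each C^N) is given by its amplitudes in the
   computational product basis |x_0,...,x_{N-1}>, x : {ffun 'I_N -> 'I_N}. *)
Definition state := {ffun 'I_N -> 'I_N} -> C.

Definition mxadj (A : 'M[C]_N) : 'M[C]_N := \matrix_(i, j) (A j i)^*.

Definition unitary (A : 'M[C]_N) : Prop := mxadj A *m A = 1%:M.

(* Vectors of a basis are the COLUMNS of the matrix a: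
   |alpha_i> has components a k i, k : 'I_N. *)

Definition singlet (a : 'M[C]_N) : state := fun x =>
  (sqrtC (N`!)%:R)^-1 *
  \sum_(s : 'S_N) (-1) ^+ s * \prod_(p : 'I_N) a (x p) (s p).

Definition upd (x : {ffun 'I_N -> 'I_N}) (q : nat) (y : 'I_N)
  : {ffun 'I_N -> 'I_N} := [ffun j => if val j == q then y else x j].

(* unnormalized post-measurement state: projector |v><v| applied to qudit q
   (q is the 0-based position, given as a nat; the product over the single
   position j with val j = q is just v (x_q)) *)
Definition proj (q : nat) (v : 'I_N -> C) (psi : state) : state := fun x =>
  (\prod_(j : 'I_N | val j == q) v (x j)) *
  \sum_(y : 'I_N) (v y)^* * psi (upd x q y).

Definition normsq (psi : state) : C := \sum_x `|psi x| ^+ 2.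

(* Sequential measurements: party m (m = 1..) measures qudit m (0-based
   position m-1) in the basis alpha m and obtains outcome index n m.
   post alpha n psi0 m = unnormalized state after parties 1..m. *)
Fixpoint post (alpha : nat -> 'M[C]_N) (n : nat -> 'I_N) (psi0 : state)
    (m : nat) : state :=
  match m with
  | 0 => psi0
  | m'.+1 => proj m' (fun i => alpha m'.+1 i (n m'.+1)) (post alpha n psi0 m')
  end.

(* (N-M)-singlet on qudits M+1..N (0-based positions M..N-1), in the basis
   a with the levels a_{n 1},...,a_{n M} excluded:
     1/sqrt((N-M)!) sum_sigma sgn(sigma) |a_{sigma(M+1)},...,a_{sigma(N)}>,
   sigma ranging over bijections from the positions M..N-1 onto the
   complementary index set 'I_N \ {n 1,...,n M}.  Such a sigma is encoded as
   the unique permutation s of 'I_N extending it by s p = n (p+1) for p < M;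
   sgn(sigma) is taken to be the sign of s (a fixed convention; any other
   identification changes the state only by a global sign). *)
Definition singlet_excl (M : nat) (a : 'M[C]_N) (n : nat -> 'I_N) : state :=
  fun x =>
  (sqrtC ((N - M)`!)%:R)^-1 *
  \sum_(s : 'S_N | [forall p : 'I_N, (p < M)%N ==> (s p == n p.+1)])
     (-1) ^+ s * \prod_(p : 'I_N | (M <= p)%N) a (x p) (s p).

Definition final_target (M : nat) (alpha : nat -> 'M[C]_N) (n : nat -> 'I_N)
  : state := fun x =>
  (\prod_(p : 'I_N | (p < M)%N) alpha p.+1 (x p) (n p.+1)) *
  singlet_excl M (alpha M) n x.

Definition prev_outcome (n : nat -> 'I_N) (m : nat) (j : 'I_N) : bool :=
  [exists k : 'I_m, (0 < k)%N && (n k == j)].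

End Defs.

From HB Require Import structures.
From mathcomp Require Import all_boot all_order all_algebra all_fingroup.
Set Implicit Arguments. Unset Strict Implicit. Unset Printing Implicit Defensive.
Import Order.TTheory GRing.Theory Num.Theory.
Local Open Scope ring_scope.

(* After m measurements the unnormalized state is a scalar multiple of
   slater m n b = sum_s sgn(s) |b_(s 0), ..., b_(s (N-1))>, the sum running over
   the permutations with s p = n_(p+1) for p < m, in any orthonormal basis b that
   contains the levels already measured.  Projecting qudit m onto b_(n_(m+1))
   keeps, by orthonormality, exactly the terms with s m = n_(m+1).  Passing to the
   next basis b' only multiplies the sum by det (b'^* b): the sum is the
   determinant of a matrix whose first m rows are masked to the columns
   n_1, ..., n_m, and b'^* b acts trivially on those levels.  After M steps the
   state is therefore proportional to the target, which has unit norm since its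
   (N-M)! terms are orthonormal; normalizing turns the scalar into a phase. *)

Lemma card_ord_geq N m : #|[set p : 'I_N | (m <= p)%N]| = (N - m)%N.
Proof.
rewrite -sum1_card.
have := @big_geq_mkord _ 0%N addn m N predT (fun _ => 1%N).
rewrite big_const_nat iter_addn_0 mul1n => ->.
by apply: eq_bigl => p; rewrite inE.
Qed.

Section Slater.
Variables (C : numClosedFieldType) (N : nat).
Implicit Types (a b B : 'M[C]_N) (n : nat -> 'I_N) (s t : 'S_N).
Implicit Types (x : {ffun 'I_N -> 'I_N}) (psi phi : state C N).

Lemma mxadjM a B : mxadj (a *m B) = mxadj B *m mxadj a.
Proof.
apply/matrixP => i j; rewrite !mxE rmorph_sum; apply: eq_bigr => k _.
by rewrite !mxE rmorphM mulrC.
Qed.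

Lemma unitaryM a B : unitary a -> unitary B -> unitary (a *m B).
Proof.
rewrite /unitary mxadjM => unit_a unit_B.
by rewrite mulmxA -(mulmxA (mxadj B)) unit_a mulmx1 unit_B.
Qed.

Lemma unitary_dot b i j : unitary b -> \sum_k (b k i)^* * b k j = (i == j)%:R.
Proof.
move/(congr1 (fun A : 'M[C]_N => A i j)); rewrite !mxE => <-.
by apply: eq_bigr => k _; rewrite mxE.
Qed.

Definition basis_prod b s : state C N := fun x => \prod_p b (x p) (s p).

Lemma basis_prod_orthonormal b s t : unitary b ->
  \sum_x basis_prod b s x * (basis_prod b t x)^* = (s == t)%:R.
Proof.
move=> unit_b.
rewrite (eq_bigr (fun x => \prod_p ((b (x p) (t p))^* * b (x p) (s p)))); last first.
  by move=> x _; rewrite mulrC rmorph_prod -big_split.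
rewrite -(bigA_distr_bigA (fun p i => (b i (t p))^* * b i (s p))) /=.
under eq_bigr do rewrite unitary_dot //.
have [<-|neq_st] := eqVneq s t; first by rewrite big1 // => p _; rewrite eqxx.
have [p neq_stp] : exists p, s p != t p.
  apply/existsP; apply: contraNT neq_st; rewrite negb_exists => /forallP eq_st.
  by apply/eqP/permP => p; apply/eqP/negPn/eq_st.
by rewrite (bigD1 p) //= eq_sym (negbTE neq_stp) mul0r.
Qed.

Definition extends_outcomes m n s : bool :=
  [forall p : 'I_N, (p < m)%N ==> (s p == n p.+1)].

Lemma extends_outcomesS m n s (lt_mN : (m < N)%N) :
  extends_outcomes m.+1 n s =
  extends_outcomes m n s && (s (Ordinal lt_mN) == n m.+1).
Proof.
apply/forallP/andP => [ext_s | [/forallP ext_s ext_m] p].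
  split; last exact: implyP (ext_s (Ordinal lt_mN)) _.
  apply/forallP => p; apply/implyP => lt_pm.
  by apply: implyP (ext_s p) _; apply: ltnW.
apply/implyP; rewrite ltnS leq_eqVlt => /orP [/eqP eq_pm | lt_pm].
  by rewrite (_ : p = Ordinal lt_mN) //; apply: val_inj.
exact: implyP (ext_s p) _.
Qed.

Lemma card_extends_outcomes m n s0 : (m <= N)%N -> extends_outcomes m n s0 ->
  #|[pred s | extends_outcomes m n s]| = (N - m)`!.
Proof.
move=> le_mN /forallP ext_s0.
rewrite -card_ord_geq -card_perm -[RHS](card_imset _ (@mulIg _ s0)).
apply: eq_card => s /=; apply/forallP/imsetP => [ext_s | [t on_t ->] p].
  exists (s * s0^-1)%g; last by rewrite -mulgA mulVg mulg1.
  apply/subsetP => p; rewrite !inE permM; apply: contraR; rewrite -ltnNge => lt_pm.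
  by rewrite (eqP (implyP (ext_s p) lt_pm)) -(eqP (implyP (ext_s0 p) lt_pm)) permK.
apply/implyP => lt_pm; rewrite permM (out_perm on_t); last by rewrite inE -ltnNge.
exact: implyP (ext_s0 p) lt_pm.
Qed.

Definition slater m n b : state C N := fun x =>
  \sum_(s | extends_outcomes m n s) (-1) ^+ s * basis_prod b s x.

Lemma singlet_slater n a :
  singlet a =1 (fun x => (sqrtC (N`!)%:R)^-1 * slater 0 n a x).
Proof.
move=> x; congr (_ * _); apply: eq_bigl => s.
by symmetry; apply/forallP => p; rewrite ltn0.
Qed.

Lemma normsq_scale psi phi c :
  psi =1 (fun x => c * phi x) -> normsq psi = `|c| ^+ 2 * normsq phi.
Proof.
move=> eq_psi; rewrite /normsq mulr_sumr; apply: eq_bigr => x _.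
by rewrite eq_psi normrM exprMn.
Qed.

Lemma normsq_slater m n b : unitary b ->
  normsq (slater m n b) = #|[pred s | extends_outcomes m n s]|%:R.
Proof.
move=> unit_b; rewrite /normsq.
have expand x : `|slater m n b x| ^+ 2 =
    \sum_(s | extends_outcomes m n s) \sum_(t | extends_outcomes m n t)
      ((-1) ^+ s * (-1) ^+ t) * (basis_prod b s x * (basis_prod b t x)^*).
  rewrite normCK /slater rmorph_sum mulr_suml; apply: eq_bigr => s _.
  rewrite mulr_sumr; apply: eq_bigr => t _.
  by rewrite rmorphM rmorph_sign mulrACA.
under eq_bigr do rewrite expand.
rewrite exchange_big; under eq_bigr do rewrite exchange_big.
under eq_bigr do under eq_bigr do rewrite -mulr_sumr basis_prod_orthonormal //.
rewrite -sumr_const; apply: eq_bigr => s ext_s.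
rewrite (bigD1 s) //= eqxx mulr1 -signr_addb addbb big1 ?addr0 // => t /andP [_].
by rewrite eq_sym => /negbTE ->; rewrite mulr0.
Qed.

Lemma proj_ext q v psi phi : psi =1 phi -> proj q v psi =1 proj q v phi.
Proof.
move=> eq_psi x; rewrite /proj; congr (_ * _).
by apply: eq_bigr => y _; rewrite eq_psi.
Qed.

Lemma proj_scale q v c psi x :
  proj q v (fun y => c * psi y) x = c * proj q v psi x.
Proof.
rewrite /proj [RHS]mulrCA [X in _ = _ * X]mulr_sumr; congr (_ * _).
by apply: eq_bigr => y _; rewrite mulrCA.
Qed.

Lemma proj_sum q v (I : finType) (P : pred I) (F : I -> state C N) x :
  proj q v (fun y => \sum_(i | P i) F i y) x = \sum_(i | P i) proj q v (F i) x.
Proof.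
rewrite /proj; under [\sum_(y < N) _]eq_bigr do rewrite mulr_sumr.
by rewrite exchange_big mulr_sumr.
Qed.

Lemma proj_basis_prod q (lt_qN : (q < N)%N) b j s : unitary b ->
  proj q (fun i => b i j) (basis_prod b s) =1
  (fun x => (s (Ordinal lt_qN) == j)%:R * basis_prod b s x).
Proof.
move=> unit_b x; set q' := Ordinal lt_qN.
have split_q y : basis_prod b s (upd x q y) =
    b y (s q') * \prod_(p | p != q') b (x p) (s p).
  rewrite /basis_prod (bigD1 q') //= ffunE eqxx; congr (_ * _).
  by apply: eq_bigr => p ne_pq; rewrite ffunE ifN.
rewrite /proj (big_pred1 q') => [|p]; last by rewrite /= -val_eqE.
under eq_bigr do rewrite split_q mulrA.
rewrite -mulr_suml unitary_dot // eq_sym; case: eqP => [eq_sj|]; last first.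
  by rewrite !mul0r mulr0.
by rewrite !mul1r /basis_prod [RHS](bigD1 q') //= eq_sj.
Qed.

Lemma proj_slater m n b (lt_mN : (m < N)%N) : unitary b ->
  proj m (fun i => b i (n m.+1)) (slater m n b) =1 slater m.+1 n b.
Proof.
move=> unit_b x; rewrite /slater proj_sum.
under eq_bigr do rewrite proj_scale (proj_basis_prod lt_mN) //.
rewrite (eq_bigl _ _ (fun s => extends_outcomesS n s lt_mN)) big_mkcondr /=.
apply: eq_bigr => s _; case: eqP => _; first by rewrite mul1r.
by rewrite mul0r mulr0.
Qed.

Definition slater_mx m n b x : 'M[C]_N := \matrix_(p, j)
  if (p < m)%N then (j == n p.+1)%:R * b (x p) j else b (x p) j.

Lemma slater_det m n b x : slater m n b x = \det (slater_mx m n b x).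
Proof.
rewrite /slater big_mkcond; apply: eq_bigr => s _; case: ifPn => [/forallP ext_s|].
  congr (_ * _); apply: eq_bigr => p _; rewrite mxE.
  by case: ifPn => // lt_pm; rewrite (implyP (ext_s p) lt_pm) mul1r.
rewrite negb_forall => /existsP [p]; rewrite negb_imply => /andP [lt_pm ne_sp].
by rewrite (bigD1 p) //= mxE lt_pm (negbTE ne_sp) !mul0r mulr0.
Qed.

Lemma slater_mx_mulmx m n b B x :
    (forall p : 'I_N, (p < m)%N -> forall i,
       B (n p.+1) i = (n p.+1 == i)%:R /\ B i (n p.+1) = (i == n p.+1)%:R) ->
  slater_mx m n (b *m B) x = slater_mx m n b x *m B.
Proof.
move=> fix_B; apply/matrixP => p j; rewrite !mxE.
case: ifPn => [lt_pm | ge_pm]; last first.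
  by apply: eq_bigr => k _; rewrite mxE (negbTE ge_pm).
have -> : \sum_k slater_mx m n b x p k * B k j =
    b (x p) (n p.+1) * (n p.+1 == j)%:R.
  rewrite (bigD1 (n p.+1)) //= mxE lt_pm eqxx mul1r (fix_B p lt_pm j).1.
  by rewrite big1 ?addr0 // => k ne_kn; rewrite mxE lt_pm (negbTE ne_kn) !mul0r.
have [->|_] := eqVneq j (n p.+1); last by rewrite mul0r mulr0.
rewrite mul1r mulr1 (bigD1 (n p.+1)) //= (fix_B p lt_pm _).2 eqxx mulr1.
rewrite big1 ?addr0 // => k ne_kn.
by rewrite (fix_B p lt_pm k).2 (negbTE ne_kn) mulr0.
Qed.

Lemma slater_change_basis m n b b' : unitary b -> unitary b' ->
    (forall p : 'I_N, (p < m)%N -> forall k, b k (n p.+1) = b' k (n p.+1)) ->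
  slater m n b =1 (fun x => \det (mxadj b' *m b) * slater m n b' x).
Proof.
move=> unit_b unit_b' eq_cols x; set B := mxadj b' *m b.
have -> : b = b' *m B by rewrite mulmxA (mulmx1C unit_b') mul1mx.
rewrite !slater_det slater_mx_mulmx ?det_mulmx 1?mulrC // => p lt_pm i.
rewrite !mxE -(unitary_dot _ _ unit_b) -(unitary_dot _ _ unit_b').
by split; apply: eq_bigr => k _; rewrite mxE eq_cols.
Qed.

Lemma final_target_slater M (alpha : nat -> 'M[C]_N) n :
    (forall p : 'I_N, (p < M)%N -> forall i,
       alpha M i (n p.+1) = alpha p.+1 i (n p.+1)) ->
  final_target M alpha n =1
  (fun x => (sqrtC ((N - M)`!)%:R)^-1 * slater M n (alpha M) x).
Proof.
move=> eq_cols x; rewrite /final_target /singlet_excl mulrCA; congr (_ * _).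
rewrite mulr_sumr; apply: eq_bigr => s /forallP ext_s.
rewrite mulrCA /basis_prod [\prod_p _](bigID (fun p : 'I_N => (p < M)%N)) /=.
congr (_ * (_ * _)).
  by apply: eq_bigr => p lt_pM; rewrite (eqP (implyP (ext_s p) lt_pM)) eq_cols.
by apply: eq_bigl => p; rewrite -leqNgt.
Qed.

Lemma normsq_normalized_slater m n b s0 :
    unitary b -> (m <= N)%N -> extends_outcomes m n s0 ->
  normsq (fun x => (sqrtC ((N - m)`!)%:R)^-1 * slater m n b x) = 1.
Proof.
move=> unit_b le_mN ext_s0; have pos_fact : 0 < ((N - m)`!)%:R :> C.
  by rewrite ltr0n fact_gt0.
rewrite (normsq_scale (phi := slater m n b) (c := (sqrtC ((N - m)`!)%:R)^-1)) //.
rewrite normsq_slater // (card_extends_outcomes le_mN ext_s0).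
by rewrite normfV ger0_norm ?sqrtC_ge0 ?ltW // exprVn sqrtCK mulVf ?gt_eqF.
Qed.

Lemma normalized_phase psi phi kap : psi =1 (fun x => kap * phi x) ->
    normsq phi = 1 -> (exists x, psi x != 0) ->
  exists c : C, `|c| = 1 /\ forall x, psi x / sqrtC (normsq psi) = c * phi x.
Proof.
move=> eq_psi norm_phi [x0 nz_psi]; have nz_kap : kap != 0.
  by apply: contraNneq nz_psi => kap0; rewrite eq_psi kap0 mul0r.
exists (kap / `|kap|); split; first by rewrite normf_div normr_id divff ?normr_eq0.
move=> x; rewrite (normsq_scale eq_psi) norm_phi mulr1 sqrCK //.
by rewrite eq_psi mulrAC.
Qed.

End Slater.

Section MeasurementChain.
Variables (C : numClosedFieldType) (N M : nat).
Variables (alpha U : nat -> 'M[C]_N) (n : nat -> 'I_N).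
Hypothesis lt_MN : (M < N)%N.
Hypothesis unit_alpha0 : unitary (alpha 0%N).
Hypothesis alpha_step : forall m : nat, (1 <= m <= M)%N ->
  unitary (U m) /\ alpha m = U m *m alpha m.-1.
Hypothesis U_fixes_outcomes : forall m k : nat, (2 <= m <= M)%N -> (1 <= k < m)%N ->
  U m *m col (n k) (alpha m.-1) = col (n k) (alpha m.-1).

Lemma unitary_alpha m : (m <= M)%N -> unitary (alpha m).
Proof.
elim: m => // m IHm le_mM; have [unit_U ->] := @alpha_step m.+1 le_mM.
exact: unitaryM unit_U (IHm (ltnW le_mM)).
Qed.

Lemma alpha_outcome_colS m k i : (1 <= k <= m)%N -> (m < M)%N ->
  alpha m.+1 i (n k) = alpha m i (n k).
Proof.
move=> /andP [k_gt0 le_km] lt_mM; have [_ ->] := @alpha_step m.+1 lt_mM.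
have := congr1 (fun v : 'cV_N => v i 0) (U_fixes_outcomes (m := m.+1) (k := k) _ _).
rewrite !mxE => <-.
- by apply: eq_bigr => j _; rewrite !mxE.
- by rewrite lt_mM ltnS (leq_trans k_gt0 le_km).
- by rewrite k_gt0 ltnS.
Qed.

Lemma alpha_outcome_col k m i : (1 <= k <= m)%N -> (m <= M)%N ->
  alpha m i (n k) = alpha k i (n k).
Proof.
move=> /andP [k_gt0]; elim: m => [|m IHm]; first by move/(leq_trans k_gt0).
rewrite leq_eqVlt ltnS => /orP [/eqP -> // | le_km lt_mM].
by rewrite alpha_outcome_colS ?k_gt0 // IHm // ltnW.
Qed.

Lemma post_slater m : (m <= M)%N -> exists lam,
  post alpha n (singlet (alpha 0%N)) m =1 (fun x => lam * slater m n (alpha m) x).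
Proof.
elim: m => [_ | m IHm lt_mM]; first by eexists; apply: singlet_slater.
have [lam post_m] := IHm (ltnW lt_mM); set B := mxadj (alpha m.+1) *m alpha m.
have change : slater m n (alpha m) =1 (fun x => \det B * slater m n (alpha m.+1) x).
  apply: slater_change_basis => [||p lt_pm i]; last by rewrite alpha_outcome_colS.
    exact: unitary_alpha (ltnW lt_mM).
  exact: unitary_alpha.
exists (lam * \det B) => x /=.
rewrite (proj_ext _ _ post_m) proj_scale (proj_ext _ _ change) proj_scale.
rewrite proj_slater ?mulrA //; first exact: ltn_trans lt_mM lt_MN.
exact: unitary_alpha.
Qed.

End MeasurementChain.

Theorem corollary1 (C : numClosedFieldType) (N M : nat)
    (alpha U : nat -> 'M[C]_N) (n : nat -> 'I_N) :
  (M < N)%N ->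
  (* alpha^{(0)} is an orthonormal basis *)
  unitary (alpha 0%N) ->
  (* alpha^{(m)}_i = U^{(m)} alpha^{(m-1)}_i with U^{(m)} unitary *)
  (forall m : nat, (1 <= m <= M)%N ->
     unitary (U m) /\ alpha m = U m *m alpha m.-1) ->
  (* for m >= 2: U^{(m)} fixes alpha^{(m-1)}_{n_k}, k < m ... *)
  (forall m k : nat, (2 <= m <= M)%N -> (1 <= k < m)%N ->
     U m *m col (n k) (alpha m.-1) = col (n k) (alpha m.-1)) ->
  (* ... and maps the span of the remaining alpha^{(m-1)}_i into itself *)
  (forall (m : nat) (i : 'I_N), (2 <= m <= M)%N -> ~~ prev_outcome n m i ->
     exists c : 'I_N -> C,
       (forall j, prev_outcome n m j -> c j = 0) /\
       U m *m col i (alpha m.-1)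
         = \sum_(j : 'I_N) c j *: col j (alpha m.-1)) ->
  (* the outcomes n 1, ..., n M occur (nonzero probability) *)
  (exists x, post alpha n (singlet (alpha 0%N)) M x != 0) ->
  (* the normalized final state equals the target up to a global phase *)
  exists c : C, `|c| = 1 /\
    forall x,
      post alpha n (singlet (alpha 0%N)) M x
        / sqrtC (normsq (post alpha n (singlet (alpha 0%N)) M))
      = c * final_target M alpha n x.
Proof.
move=> lt_MN unit_a0 alpha_step U_fixes _ occurs.
have [lam post_M] := post_slater lt_MN unit_a0 alpha_step U_fixes (leqnn M).
have target := final_target_slater (fun p lt_pM i =>
  alpha_outcome_col alpha_step U_fixes (k := p.+1) i lt_pM (leqnn M)).
have [s0 ext_s0] : exists s0, extends_outcomes M n s0.
  have [s0 ext_s0 | no_ext] := pickP (extends_outcomes M n); first by exists s0.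
  by case: occurs => x; rewrite post_M /slater big_pred0 ?mulr0 ?eqxx.
apply: (normalized_phase (kap := lam * sqrtC ((N - M)`!)%:R)) => //.
  move=> x; rewrite post_M target mulrA mulfK //.
  by rewrite sqrtC_eq0 pnatr_eq0 -lt0n fact_gt0.
have unit_alphaM := unitary_alpha unit_a0 alpha_step (leqnn M).
rewrite -(normsq_normalized_slater unit_alphaM (ltnW lt_MN) ext_s0).
by apply: eq_bigr => x _; rewrite target.
Qed.
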